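(* For every $\beta>1$, the $\beta$-shift $(X_\beta,\sigma)$ is $\mathrm{Per}(G_\beta,\Theta_\beta)$-closeable, i.e. every ergodic $\sigma$-invariant measure on $X_\beta$ has a generic point which is $\mathrm{Per}(G_\beta,\Theta_\beta)$-closeable.
   Context: Shift: for an alphabet $\mathcal A=\{0,1,\dots,r-1\}$, $\mathcal A^{\mathbb N}$ carries the metric $\rho(x,y)=2^{-\min\{k:x_k\ne y_k\}}$ for $x\ne y$, and $\sigma((\omega_i)_i)=(\omega_{i+1})_i$. $\beta$-shift: fix $\beta>1$, $T_\beta(x)=\beta x\bmod1$. The $\beta$-expansion of $1$ is $d_\beta=(d_j)_{j\ge1}$ with $d_j=\lfloor\beta T_\beta^{j-1}(1)\rfloor$. If $d_\beta$ ends in $0^\infty$ with last nonzero digit $d_k$, set $\widehat d_\beta=(d_1\dots d_{k-1}(d_k-1))^\infty$; otherwise $\widehat d_\beta=d_\beta$; write $\widehat d_\beta=(d_j)_{j\ge1}$. The $\beta$-shift $X_\beta\subset\{0,\dots,\lfloor\beta\rfloor\}^{\mathbb N}$ is the closure of the set of sequences $b$ with $\sigma^k(b)\prec\widehat d_\beta$ (lexicographic order) for all $k\ge0$. The labelled graph $(G_\beta,\Theta_\beta)$ has vertices $v_0,v_1,\dots$; for each $i\ge0$ an edge $v_i\to v_{i+1}$ labelled $d_{i+1}$, and if $d_{i+1}>0$, $d_{i+1}$ edges $v_i\to v_0$ labelled $0,1,\dots,d_{i+1}-1$. $\mathrm{Per}(G_\beta,\Theta_\beta)$ is the set of periodic points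 $w^\infty$ where $w$ is the label sequence of a closed path in $G_\beta$. $\mathcal E(x,n)=\frac1n\sum_{j<n}\delta_{\sigma^jx}$; $x$ is generic for $\mu$ if $\mathcal E(x,n)\to\mu$ weak$*$. $B(x,n,\varepsilon)=\{y:\rho(\sigma^jy,\sigma^jx)<\varepsilon,\ 0\le j<n\}$. A point $x$ is $K$-closeable if for every $\varepsilon>0$, $N>0$ there exist integers $N\le p\le q\le(1+\varepsilon)p$ and $y\in B(x,p,\varepsilon)\cap K$ with $\sigma^qy=y$. *)

From Stdlib Require Import Reals Lra Lia Arith ClassicalEpsilon ConstructiveEpsilon.
Open Scope R_scope.

(** Sequences over the alphabet are functions nat -> nat (indices from 0). *)
Definition Seq := nat -> nat.

Definition shiftn (k : nat) (x : Seq) : Seq := fun i => x (k + i)%nat.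

(** metric rho(x,y) = 2^{-min{k : x_k <> y_k}}, and 0 if x = y *)
Definition rho (x y : Seq) : R :=
  match excluded_middle_informative (exists k, x k <> y k) with
  | left H =>
      (/ 2) ^ (proj1_sig (ConstructiveEpsilon.epsilon_smallest (fun k => x k <> y k)
                 (fun k => match Nat.eq_dec (x k) (y k) with
                           | left e => right (fun h => h e)
                           | right n => left n end) H))
  | right _ => 0
  end.

Definition rfloor (x : R) : Z := (up x - 1)%Z.
Definition Tbeta (beta x : R) : R := beta * x - IZR (rfloor (beta * x)).

(** d_j = floor(beta * T_beta^{j-1}(1)), for j >= 1 *)
Definition dexp (beta : R) (j : nat) : nat :=
  Z.to_nat (rfloor (beta * Nat.iter (j - 1) (Tbeta beta) 1)).

Definition last_nonzero (beta : R) (k : nat) : Prop :=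
  (1 <= k)%nat /\ dexp beta k <> 0%nat /\ (forall j, (k < j)%nat -> dexp beta j = 0%nat).

(** hat d_beta, as a 0-indexed sequence: dhat beta i = \hat d_{i+1} *)
Definition dhat (beta : R) : Seq := fun i =>
  match excluded_middle_informative (exists k, last_nonzero beta k) with
  | left H =>
      let k := proj1_sig (@ClassicalEpsilon.constructive_indefinite_description nat (last_nonzero beta) H) in
      let m := (i mod k)%nat in
      if Nat.eqb m (k - 1) then (dexp beta k - 1)%nat else dexp beta (m + 1)
  | right _ => dexp beta (i + 1)
  end.

Definition lex_lt (x y : Seq) : Prop :=
  exists n, (forall i, (i < n)%nat -> x i = y i) /\ (x n < y n)%nat.

Definition Xbeta0 (beta : R) (b : Seq) : Prop :=
  (forall i, (b i <= Z.to_nat (rfloor beta))%nat) /\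
  (forall k, lex_lt (shiftn k b) (dhat beta)).

Definition Xbeta (beta : R) (x : Seq) : Prop :=
  forall eps, 0 < eps -> exists b, Xbeta0 beta b /\ rho x b < eps.

(** labelled graph G_beta: vertices v_i = i; edge i -> j with label a *)
Definition Gedge (beta : R) (i j a : nat) : Prop :=
  (j = S i /\ a = dhat beta i) \/ (j = 0%nat /\ (a < dhat beta i)%nat).

Definition PerG (beta : R) (y : Seq) : Prop :=
  exists (v w : nat -> nat) (n : nat),
    (0 < n)%nat /\ v n = v 0%nat /\
    (forall i, (i < n)%nat -> Gedge beta (v i) (v (S i)) (w i)) /\
    (forall i, y i = w (i mod n)%nat).

Definition Bowen (x : Seq) (n : nat) (eps : R) (y : Seq) : Prop :=
  forall j, (j < n)%nat -> rho (shiftn j y) (shiftn j x) < eps.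

Definition closeable (K : Seq -> Prop) (x : Seq) : Prop :=
  forall (eps : R) (N : nat), 0 < eps -> (0 < N)%nat ->
    exists (p q : nat) (y : Seq),
      (N <= p)%nat /\ (p <= q)%nat /\ INR q <= (1 + eps) * INR p /\
      Bowen x p eps y /\ K y /\ (forall i, y (q + i)%nat = y i).

(** Borel sigma-algebra of N^N (product of discrete topologies),
    generated by cylinder sets *)
Inductive borel : (Seq -> Prop) -> Prop :=
| borel_cyl : forall (n : nat) (w : Seq),
    borel (fun x => forall i, (i < n)%nat -> x i = w i)
| borel_compl : forall A, borel A -> borel (fun x => ~ A x)
| borel_union : forall A : nat -> Seq -> Prop,
    (forall n, borel (A n)) -> borel (fun x => exists n, A n x).

(** Borel probability measure (values outside Borel sets are irrelevant) *)
Definition prob_measure (mu : (Seq -> Prop) -> R) : Prop :=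
  (forall A, borel A -> 0 <= mu A) /\
  mu (fun _ => True) = 1 /\
  (forall A : nat -> Seq -> Prop,
     (forall n, borel (A n)) ->
     (forall n m x, n <> m -> A n x -> A m x -> False) ->
     infinite_sum (fun n => mu (A n)) (mu (fun x => exists n, A n x))).

(** a Borel probability measure on X_beta, i.e. concentrated on X_beta *)
Definition measure_on (S : Seq -> Prop) (mu : (Seq -> Prop) -> R) : Prop :=
  prob_measure mu /\ mu S = 1.

Definition invariant (mu : (Seq -> Prop) -> R) : Prop :=
  forall A, borel A -> mu (fun x => A (shiftn 1 x)) = mu A.

Definition ergodic_on (S : Seq -> Prop) (mu : (Seq -> Prop) -> R) : Prop :=
  forall A, borel A -> (forall x, S x -> (A (shiftn 1 x) <-> A x)) ->
    mu A = 0 \/ mu A = 1.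

Definition indic (A : Seq -> Prop) (x : Seq) : R :=
  if excluded_middle_informative (A x) then 1 else 0.
Fixpoint sval (l : list (R * (Seq -> Prop))) (x : Seq) : R :=
  match l with nil => 0 | cons (c, A) l' => c * indic A x + sval l' x end.
Fixpoint sint (mu : (Seq -> Prop) -> R) (l : list (R * (Seq -> Prop))) : R :=
  match l with nil => 0 | cons (c, A) l' => c * mu A + sint mu l' end.
Definition simple (l : list (R * (Seq -> Prop))) : Prop :=
  forall c A, List.In (c, A) l -> borel A.

(** I = \int_S f dmu (for bounded measurable f on S, with mu(S)=1):
    I lies between all lower and upper simple-function integrals *)
Definition integral (S : Seq -> Prop) (mu : (Seq -> Prop) -> R) (f : Seq -> R) (I : R) : Prop :=
  (forall l, simple l -> (forall x, S x -> sval l x <= f x) -> sint mu l <= I) /\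
  (forall l, simple l -> (forall x, S x -> f x <= sval l x) -> I <= sint mu l).

Definition continuous_on (S : Seq -> Prop) (f : Seq -> R) : Prop :=
  forall x, S x -> forall eps, 0 < eps -> exists delta, 0 < delta /\
    forall y, S y -> rho x y < delta -> Rabs (f y - f x) < eps.

(** x is generic for mu: E(x,n) -> mu weak-*, i.e.
    (1/n) sum_{j<n} f(sigma^j x) -> \int f dmu for every f in C(S) *)
Definition generic (S : Seq -> Prop) (mu : (Seq -> Prop) -> R) (x : Seq) : Prop :=
  forall f, continuous_on S f ->
    exists I, integral S mu f I /\
      Un_cv (fun n => sum_f_R0 (fun j => f (shiftn j x)) n / INR (n + 1)) I.

(* Closeability holds at every point of X_beta. Reading a point x of X_beta
   greedily along G_beta (follow v_i -> v_{i+1} when the digit is d_{i+1},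
   otherwise return to v_0) gives an infinite path of G_beta labelled by x.
   Stopping at a late time T at which the path can be closed -- it sits at v_0,
   or its vertex has an edge back to v_0 -- and repeating the first T labels
   gives a point of Per(G_beta) of period T or T + 1 shadowing x for T - L steps.

   For genericity, the maximal inequality together with ergodicity gives the
   ergodic theorem for the indicator of every cylinder, so almost every point
   of X_beta sees every word with frequency equal to the measure of its
   cylinder. Such a point is generic: a continuous function on the compact
   space X_beta is uniformly continuous, hence uniformly close to a function
   of finitely many coordinates, which is a finite combination of cylinder
   indicators. *)

From Stdlib Require Import Reals.
From Stdlib Require Import Lra Lia Arith List.
From Stdlib Require Import Classical ClassicalEpsilon FunctionalExtensionality PropExtensionality.
Import ListNotations.
Open Scope R_scope.

(** * Borel sets *)

Lemma set_ext (A B : Seq -> Prop) : (forall x, A x <-> B x) -> A = B.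
Proof.
  intros H; apply functional_extensionality; intro x.
  apply propositional_extensionality; auto.
Qed.

Lemma borel_ext A B : borel A -> (forall x, A x <-> B x) -> borel B.
Proof. intros H E; rewrite <- (set_ext A B E); exact H. Qed.

Lemma borel_True : borel (fun _ => True).
Proof.
  apply (borel_ext (fun x => forall i, (i < 0)%nat -> x i = 0%nat)); [apply borel_cyl|].
  intros x; split; auto. intros _ i Hi; lia.
Qed.

Lemma borel_False : borel (fun _ => False).
Proof. apply (borel_ext (fun x => ~ True)); [apply borel_compl, borel_True | tauto]. Qed.

Lemma borel_inter_count (A : nat -> Seq -> Prop) :
  (forall n, borel (A n)) -> borel (fun x => forall n, A n x).
Proof.
  intros H. apply (borel_ext (fun x => ~ exists n, ~ A n x)).
  - apply borel_compl, (borel_union (fun n x => ~ A n x)); intros; apply borel_compl; auto.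
  - intros x; split.
    + intros Hn n; apply NNPP; intro C; apply Hn; eauto.
    + intros Hn [n Hc]; auto.
Qed.

Definition pick2 (A B : Seq -> Prop) (n : nat) : Seq -> Prop :=
  match n with 0%nat => A | _ => B end.

Lemma borel_union2 A B : borel A -> borel B -> borel (fun x => A x \/ B x).
Proof.
  intros HA HB. apply (borel_ext (fun x => exists n, pick2 A B n x)).
  - apply borel_union. intros [|n]; auto.
  - intros x; split.
    + intros [[|n] H]; auto.
    + intros [H|H]; [exists 0%nat | exists 1%nat]; auto.
Qed.

Lemma borel_inter A B : borel A -> borel B -> borel (fun x => A x /\ B x).
Proof.
  intros HA HB. apply (borel_ext (fun x => forall n, pick2 A B n x)).
  - apply borel_inter_count. intros [|n]; auto.
  - intros x; split.
    + intros H; exact (conj (H 0%nat) (H 1%nat)).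
    + intros [a b] [|n]; auto.
Qed.

Lemma shiftn_shiftn a b x : shiftn a (shiftn b x) = shiftn (b + a) x.
Proof. unfold shiftn; apply functional_extensionality; intro i; f_equal; lia. Qed.

Definition cons_seq (a : nat) (y : Seq) : Seq :=
  fun i => match i with 0%nat => a | S j => y j end.

Lemma borel_shift1 A : borel A -> borel (fun x => A (shiftn 1 x)).
Proof.
  intros H; induction H.
  - apply (borel_ext (fun x => exists a,
             forall i, (i < S n)%nat -> x i = cons_seq a w i)).
    + apply (borel_union (fun a x => forall i, (i < S n)%nat -> x i = cons_seq a w i)).
      intros a; apply borel_cyl.
    + intros x; split.
      * intros [a Ha] i Hi. apply (Ha (S i)); lia.
      * intros Hx. exists (x 0%nat). intros [|i] Hi; auto. apply (Hx i); lia.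
  - apply borel_compl; auto.
  - apply (borel_union (fun n x => A n (shiftn 1 x))); auto.
Qed.

Lemma borel_shift k A : borel A -> borel (fun x => A (shiftn k x)).
Proof.
  revert A; induction k; intros A H; [exact H|].
  apply (borel_ext (fun x => (fun y => A (shiftn k y)) (shiftn 1 x))).
  - apply (borel_shift1 (fun y => A (shiftn k y))), IHk, H.
  - intros x; cbv beta. rewrite shiftn_shiftn. reflexivity.
Qed.

Definition agree (n : nat) (x y : Seq) : Prop := forall i, (i < n)%nat -> x i = y i.

Definition prefix_determined (n : nat) (P : Seq -> Prop) : Prop :=
  forall x y, agree n x y -> (P x <-> P y).

Lemma borel_prefix_determined n : forall P, prefix_determined n P -> borel P.
Proof.
  induction n; intros P HP.
  - assert (Hconst : forall x, P x <-> P (fun _ => 0%nat)) by (intros x; apply HP; intros i Hi; lia).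
    destruct (classic (P (fun _ => 0%nat))) as [H|H].
    + apply (borel_ext (fun _ => True)); [apply borel_True|]. intros x; rewrite Hconst; tauto.
    + apply (borel_ext (fun _ => False)); [apply borel_False|]. intros x; rewrite Hconst; tauto.
  - apply (borel_ext (fun x => exists a, x 0%nat = a /\ P (cons_seq a (shiftn 1 x)))).
    + apply (borel_union (fun a x => x 0%nat = a /\ P (cons_seq a (shiftn 1 x)))); intros a.
      apply borel_inter.
      * apply (borel_ext (fun x => forall i, (i < 1)%nat -> x i = a)); [apply borel_cyl|].
        intros x; split; [intros H; apply (H 0%nat); lia | intros H [|i] Hi; [auto|lia]].
      * apply (borel_shift1 (fun y => P (cons_seq a y))), IHn.
        intros x y Hxy. apply HP. intros [|i] Hi; simpl; auto. apply Hxy; lia.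
    + assert (Hcons : forall x, agree (S n) (cons_seq (x 0%nat) (shiftn 1 x)) x)
        by (intros x [|i] _; reflexivity).
      intros x; split.
      * intros [a [<- H2]]. rewrite <- (HP _ _ (Hcons x)); auto.
      * intros Hx. exists (x 0%nat); split; auto. rewrite (HP _ _ (Hcons x)); auto.
Qed.

Lemma half_pow_pos n : 0 < (/2)^n.
Proof. apply pow_lt; lra. Qed.

Lemma half_pow_antimono m n : (m <= n)%nat -> (/2)^n <= (/2)^m.
Proof.
  intros H. replace n with (m + (n - m))%nat by lia. rewrite pow_add.
  pose proof (half_pow_pos m). pose proof (half_pow_pos (n - m)).
  assert ((/2)^(n - m) <= 1) by (rewrite <- (pow1 (n - m)); apply pow_incr; lra).
  nra.
Qed.

Lemma half_pow_small eps : 0 < eps -> exists L, (/2)^L < eps.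
Proof.
  intros He. destruct (pow_lt_1_zero (/2)) with (y := eps) as [N HN].
  - rewrite Rabs_right; lra.
  - exact He.
  - exists N. specialize (HN N (Nat.le_refl _)).
    rewrite Rabs_right in HN; [exact HN | left; apply half_pow_pos].
Qed.

Lemma rho_le_of_agree (x y : Seq) (K : nat) : agree K x y -> rho x y <= (/2)^K.
Proof.
  intros H. unfold rho. destruct excluded_middle_informative as [E|E].
  - destruct ConstructiveEpsilon.epsilon_smallest as [m [Hm1 Hm2]]. simpl.
    apply half_pow_antimono.
    destruct (le_lt_dec K m); auto. exfalso; apply Hm1; apply H; auto.
  - left; apply half_pow_pos.
Qed.

Lemma agree_of_rho_lt (x y : Seq) (t : nat) : rho x y < (/2)^t -> agree (S t) x y.
Proof.
  intros H i Hi. destruct (Nat.eq_dec (x i) (y i)) as [e|ne]; auto. exfalso.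
  unfold rho in H. destruct excluded_middle_informative as [E|E].
  - destruct ConstructiveEpsilon.epsilon_smallest as [m [Hm1 Hm2]]. simpl in H.
    specialize (Hm2 i ne). pose proof (half_pow_antimono m t ltac:(lia)). lra.
  - apply E; eauto.
Qed.

(** * Probability measures *)

Lemma mu_ext (mu : (Seq -> Prop) -> R) A B : (forall x, A x <-> B x) -> mu A = mu B.
Proof. intros E; rewrite (set_ext A B E); auto. Qed.

Lemma infinite_sum_eventually_const s l c :
  infinite_sum s l -> (exists N, forall n, (n >= N)%nat -> sum_f_R0 s n = c) -> l = c.
Proof.
  intros Hs [N HN]. apply NNPP; intro Hne.
  assert (He : Rabs (l - c) > 0) by (apply Rabs_pos_lt; lra).
  destruct (Hs _ He) as [M HM]. specialize (HM (Nat.max N M) ltac:(lia)).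
  rewrite HN in HM by lia. unfold Rdist in HM. rewrite Rabs_minus_sym in HM. lra.
Qed.

Section ProbabilityMeasure.

Variable mu : (Seq -> Prop) -> R.
Hypothesis PM : prob_measure mu.

Lemma mu_ge0 A : borel A -> 0 <= mu A.
Proof. apply PM. Qed.

Lemma mu_True : mu (fun _ => True) = 1.
Proof. apply PM. Qed.

(* A countable sum of copies of [mu set0] converges only if [mu set0 = 0]. *)
Lemma mu_False : mu (fun _ => False) = 0.
Proof.
  destruct PM as [_ [_ Hadd]].
  specialize (Hadd (fun _ _ => False) (fun _ => borel_False) ltac:(intros; tauto)).
  rewrite (mu_ext mu _ (fun _ => False)) in Hadd by (intros; split; [intros [_ []] | tauto]).
  set (a := mu (fun _ => False)) in *.
  assert (Ha : 0 <= a) by (apply mu_ge0, borel_False).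
  destruct (Req_dec a 0) as [E|E]; auto. exfalso.
  assert (Hsum : forall n, sum_f_R0 (fun _ => a) n = INR (S n) * a).
  { induction n; simpl sum_f_R0; [simpl; lra|]. rewrite IHn, !S_INR. lra. }
  destruct (Hadd a ltac:(lra)) as [N HN]. specialize (HN (S N) ltac:(lia)).
  rewrite Hsum in HN. unfold Rdist in HN. rewrite !S_INR in HN.
  pose proof (pos_INR N). rewrite Rabs_right in HN; nra.
Qed.

Lemma mu_add A B : borel A -> borel B -> (forall x, A x -> B x -> False) ->
  mu (fun x => A x \/ B x) = mu A + mu B.
Proof.
  intros HA HB Hd. destruct PM as [_ [_ Hadd]].
  set (F := fun n => match n with 0%nat => A | 1%nat => B | _ => fun _ => False end).
  specialize (Hadd F ltac:(intros [|[|n]]; simpl; auto using borel_False)).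
  specialize (Hadd ltac:(intros [|[|n]] [|[|m]] x Hnm; simpl; try tauto; try lia; eauto)).
  rewrite (mu_ext mu (fun x => exists n, F n x) (fun x => A x \/ B x)) in Hadd.
  - apply (infinite_sum_eventually_const _ _ _ Hadd). exists 1%nat. intros n Hn.
    induction n as [|n IH]; [lia|]. destruct n; [simpl; lra|].
    simpl sum_f_R0. simpl in IH. rewrite IH by lia. simpl. rewrite mu_False. lra.
  - intros x; split.
    + intros [[|[|n]] H]; simpl in H; tauto.
    + intros [H|H]; [exists 0%nat | exists 1%nat]; auto.
Qed.

Lemma mu_split A E : borel A -> borel E ->
  mu E = mu (fun x => E x /\ A x) + mu (fun x => E x /\ ~ A x).
Proof.
  intros HA HE. rewrite <- mu_add by (auto using borel_inter, borel_compl; intros x; tauto).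
  apply mu_ext. intros x; split; [|tauto]. intros Ex; destruct (classic (A x)); tauto.
Qed.

Lemma mu_compl A : borel A -> mu (fun x => ~ A x) = 1 - mu A.
Proof.
  intros HA. pose proof (mu_split A (fun _ => True) HA borel_True) as H.
  rewrite mu_True, (mu_ext mu (fun x => True /\ A x) A),
    (mu_ext mu (fun x => True /\ ~ A x) (fun x => ~ A x)) in H by (intros; tauto).
  lra.
Qed.

Lemma mu_mono A B : borel A -> borel B -> (forall x, A x -> B x) -> mu A <= mu B.
Proof.
  intros HA HB Hs.
  rewrite (mu_split A B HA HB), (mu_ext mu (fun x => B x /\ A x) A) by (intros x; split; [tauto | auto]).
  pose proof (mu_ge0 _ (borel_inter _ _ HB (borel_compl _ HA))). lra.
Qed.

Lemma mu_pos_nonempty A : 0 < mu A -> exists x, A x.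
Proof.
  intros Hp. apply NNPP; intro C.
  rewrite (mu_ext mu A (fun _ => False)), mu_False in Hp by (intros x; split; [eauto | tauto]). lra.
Qed.

(* Disjointify [A] into [A n /\ ~ before A n]. *)
Definition before (A : nat -> Seq -> Prop) (n : nat) (x : Seq) : Prop :=
  exists k, (k < n)%nat /\ A k x.

Lemma borel_before A : (forall n, borel (A n)) -> forall n, borel (before A n).
Proof.
  intros H n; induction n.
  - apply (borel_ext (fun _ => False)); [apply borel_False|].
    intros x; split; [tauto | intros [k [Hk _]]; lia].
  - apply (borel_ext (fun x => before A n x \/ A n x)); [apply borel_union2; auto|].
    intros x; split.
    + intros [[k [Hk Ha]]|Ha]; [exists k | exists n]; split; auto; lia.
    + intros [k [Hk Ha]]. destruct (Nat.eq_dec k n); subst; auto. left; exists k; split; auto; lia.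
Qed.

Lemma mu_null_union (A : nat -> Seq -> Prop) : (forall n, borel (A n)) ->
  (forall n, mu (A n) = 0) -> mu (fun x => exists n, A n x) = 0.
Proof.
  intros HA H0.
  set (D := fun n x => A n x /\ ~ before A n x).
  assert (HD : forall n, borel (D n))
    by (intros; apply borel_inter; auto using borel_compl, borel_before).
  assert (HD0 : forall n, mu (D n) = 0).
  { intros n. pose proof (mu_mono (D n) (A n) (HD n) (HA n) ltac:(intros x [h _]; auto)).
    pose proof (mu_ge0 _ (HD n)). rewrite H0 in H. lra. }
  destruct PM as [_ [_ Hadd]].
  specialize (Hadd D HD).
  rewrite (mu_ext mu (fun x => exists n, D n x) (fun x => exists n, A n x)) in Hadd.
  - apply (infinite_sum_eventually_const (fun n => mu (D n))).
    + apply Hadd. intros n m x Hnm [Hn Hn'] [Hm Hm'].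
      destruct (Nat.lt_gt_cases n m) as [[Hl|Hl] _]; auto.
      * apply Hm'; exists n; auto.
      * apply Hn'; exists m; auto.
    + exists 0%nat. intros n _. induction n; simpl; rewrite HD0; try rewrite IHn; lra.
  - intros x; split; [intros [n [Hn _]]; eauto|].
    intros [n Hn]. induction n as [n IH] using (well_founded_induction lt_wf).
    destruct (classic (before A n x)) as [[k [Hk Hak]]|Hb]; [apply (IH k); auto|].
    exists n; split; auto.
Qed.

Lemma mu_null_union2 A B : borel A -> borel B -> mu A = 0 -> mu B = 0 ->
  mu (fun x => A x \/ B x) = 0.
Proof.
  intros HA HB H1 H2.
  rewrite (mu_ext mu _ (fun x => exists n, pick2 A B n x)); [apply mu_null_union; intros [|n]; auto|].
  intros x; split.
  - intros [H|H]; [exists 0%nat | exists 1%nat]; auto.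
  - intros [[|n] H]; auto.
Qed.

Lemma mu_inter_full A B : borel A -> borel B -> mu A = 1 -> mu B = 1 ->
  mu (fun x => A x /\ B x) = 1.
Proof.
  intros HA HB H1 H2.
  assert (H : mu (fun x => ~ A x \/ ~ B x) = 0)
    by (apply mu_null_union2; auto using borel_compl; rewrite mu_compl; auto; lra).
  rewrite <- (mu_ext mu (fun x => ~ (~ A x \/ ~ B x))), mu_compl, H;
    [lra | apply borel_union2; auto using borel_compl |].
  intros x; split; [intros; split; apply NNPP; tauto | tauto].
Qed.

Lemma mu_increasing_union_approx (B : nat -> Seq -> Prop) : (forall n, borel (B n)) ->
  (forall n x, B n x -> B (S n) x) ->
  forall t, t < mu (fun x => exists n, B n x) -> exists n, t < mu (B n).
Proof.
  intros HB Hinc t Ht.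
  set (D := fun n => match n with 0%nat => B 0%nat | S m => fun x => B (S m) x /\ ~ B m x end).
  assert (HD : forall n, borel (D n)) by (intros [|n]; simpl; auto using borel_inter, borel_compl).
  assert (Hmono : forall n m x, (n <= m)%nat -> B n x -> B m x)
    by (intros n m x Hnm; induction Hnm; auto).
  assert (Hdis : forall n m x, n <> m -> D n x -> D m x -> False).
  { assert (Hlt : forall n m x, (n < m)%nat -> D n x -> D m x -> False).
    { intros n [|m] x Hnm Hn Hm; [lia|]. destruct Hm as [_ Hm]. apply Hm, (Hmono n); [lia|].
      destruct n; simpl in Hn; tauto. }
    intros n m x Hnm. destruct (Nat.lt_gt_cases n m) as [[Hl|Hl] _]; eauto. }
  assert (Hpart : forall n, sum_f_R0 (fun k => mu (D k)) n = mu (B n)).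
  { induction n; [reflexivity|]. rewrite tech5, IHn, (mu_split (B n) (B (S n))); auto.
    f_equal; apply mu_ext; simpl; intros x; split; auto; tauto. }
  destruct PM as [_ [_ Hadd]].
  specialize (Hadd D HD Hdis).
  rewrite (mu_ext mu (fun x => exists n, D n x) (fun x => exists n, B n x)) in Hadd.
  - destruct (Hadd (mu (fun x => exists n, B n x) - t) ltac:(lra)) as [N HN].
    exists N. specialize (HN N (Nat.le_refl _)). rewrite Hpart in HN. unfold Rdist in HN.
    apply Rabs_def2 in HN. lra.
  - intros x; split.
    + intros [[|n] Hn]; simpl in Hn; [eauto|]. destruct Hn; eauto.
    + intros [n Hn]. induction n; [exists 0%nat; auto|].
      destruct (classic (B n x)); auto. exists (S n); simpl; auto.
Qed.

End ProbabilityMeasure.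

Lemma indic_1 A x : A x -> indic A x = 1.
Proof. unfold indic; destruct excluded_middle_informative; tauto. Qed.

Lemma indic_0 A x : ~ A x -> indic A x = 0.
Proof. unfold indic; destruct excluded_middle_informative; tauto. Qed.

Lemma indic_range A x : 0 <= indic A x <= 1.
Proof. unfold indic; destruct excluded_middle_informative; lra. Qed.

Lemma indic_compl A x : indic (fun y => ~ A y) x = 1 - indic A x.
Proof. unfold indic. do 2 destruct excluded_middle_informative; tauto || lra. Qed.

Definition simple_opp (l : list (R * (Seq -> Prop))) := map (fun p => (- fst p, snd p)) l.

Lemma sval_app l1 l2 x : sval (l1 ++ l2) x = sval l1 x + sval l2 x.
Proof. induction l1 as [|[c A] l IH]; simpl; try rewrite IH; lra. Qed.

Lemma sint_app mu l1 l2 : sint mu (l1 ++ l2) = sint mu l1 + sint mu l2.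
Proof. induction l1 as [|[c A] l IH]; simpl; try rewrite IH; lra. Qed.

Lemma sval_opp l x : sval (simple_opp l) x = - sval l x.
Proof. induction l as [|[c A] l IH]; simpl in *; try rewrite IH; lra. Qed.

Lemma sint_opp mu l : sint mu (simple_opp l) = - sint mu l.
Proof. induction l as [|[c A] l IH]; simpl in *; try rewrite IH; lra. Qed.

Lemma simple_app l1 l2 : simple l1 -> simple l2 -> simple (l1 ++ l2).
Proof. intros H1 H2 c A H. apply in_app_or in H; destruct H; eauto. Qed.

Lemma simple_simple_opp l : simple l -> simple (simple_opp l).
Proof.
  intros H c A Hin. apply in_map_iff in Hin. destruct Hin as [[c' A'] [E Hin]].
  inversion E; subst. eauto.
Qed.

Lemma simple_cons c A l : simple ((c, A) :: l) -> borel A /\ simple l.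
Proof. intros Hs. split; [apply (Hs c A); left | intros c' A' H; apply (Hs c' A'); right]; auto. Qed.

Lemma Rabs_le_inv x a : Rabs x <= a -> - a <= x <= a.
Proof. intros H. pose proof (Rle_abs x). pose proof (Rle_abs (- x)). rewrite Rabs_Ropp in *. lra. Qed.

Section SimpleIntegral.

Variables (mu : (Seq -> Prop) -> R) (S : Seq -> Prop).
Hypotheses (PM : prob_measure mu) (HS : borel S) (HS1 : mu S = 1).

Fixpoint sint_restr (E : Seq -> Prop) (l : list (R * (Seq -> Prop))) : R :=
  match l with
  | nil => 0
  | (c, A) :: l' => c * mu (fun x => A x /\ E x) + sint_restr E l'
  end.

Lemma sint_restr_True l : sint_restr (fun _ => True) l = sint mu l.
Proof.
  induction l as [|[c A] l IH]; simpl; auto. rewrite IH. do 2 f_equal. apply mu_ext; tauto.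
Qed.

Lemma sint_restr_split l E A : simple l -> borel E -> borel A ->
  sint_restr E l = sint_restr (fun x => E x /\ A x) l + sint_restr (fun x => E x /\ ~ A x) l.
Proof.
  induction l as [|[c B] l IH]; intros Hs HE HA; simpl; [lra|].
  destruct (simple_cons _ _ _ Hs) as [HB Hs'].
  rewrite (IH Hs' HE HA), (mu_split mu PM A (fun x => B x /\ E x)) by auto using borel_inter.
  rewrite (mu_ext mu (fun x => (B x /\ E x) /\ A x) (fun x => B x /\ E x /\ A x)),
          (mu_ext mu (fun x => (B x /\ E x) /\ ~ A x) (fun x => B x /\ E x /\ ~ A x)) by tauto.
  lra.
Qed.

(* Induction on [l], splitting [E] along the set of the head term: the constant
   [K] accumulates the coefficients already known to apply on [E]. *)
Lemma sint_restr_nonneg l : simple l ->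
  forall E K, borel E -> (forall x, S x -> E x -> 0 <= K + sval l x) ->
  0 <= K * mu E + sint_restr E l.
Proof.
  induction l as [|[c A] l IH]; intros Hs E K HE Hpos; simpl in *.
  - pose proof (mu_ge0 mu PM E HE).
    destruct (classic (exists x, S x /\ E x)) as [[x [Sx Ex]]|Hn].
    + specialize (Hpos x Sx Ex). nra.
    + assert (mu E <= mu (fun x => ~ S x))
        by (apply (mu_mono mu PM); auto using borel_compl; intros x Ex Sx; apply Hn; eauto).
      rewrite (mu_compl mu PM) in H0 by auto. assert (mu E = 0) by lra. rewrite H1; lra.
  - destruct (simple_cons _ _ _ Hs) as [HA Hs'].
    assert (P1 : 0 <= (K + c) * mu (fun x => E x /\ A x) + sint_restr (fun x => E x /\ A x) l).
    { apply IH; auto using borel_inter. intros x Sx [Ex Ax].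
      specialize (Hpos x Sx Ex). rewrite indic_1 in Hpos; auto. lra. }
    assert (P2 : 0 <= K * mu (fun x => E x /\ ~ A x) + sint_restr (fun x => E x /\ ~ A x) l).
    { apply IH; auto using borel_inter, borel_compl. intros x Sx [Ex Ax].
      specialize (Hpos x Sx Ex). rewrite indic_0 in Hpos; auto. lra. }
    rewrite (sint_restr_split l E A), (mu_split mu PM A E) by auto.
    rewrite (mu_ext mu (fun x => A x /\ E x) (fun x => E x /\ A x)) by tauto. nra.
Qed.

Lemma sint_nonneg l : simple l -> (forall x, S x -> 0 <= sval l x) -> 0 <= sint mu l.
Proof.
  intros Hs Hp. rewrite <- sint_restr_True.
  pose proof (sint_restr_nonneg l Hs (fun _ => True) 0 borel_True
                ltac:(intros; rewrite Rplus_0_l; auto)).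
  lra.
Qed.

Lemma sint_mono l1 l2 : simple l1 -> simple l2 ->
  (forall x, S x -> sval l1 x <= sval l2 x) -> sint mu l1 <= sint mu l2.
Proof.
  intros H1s H2s Hle.
  pose proof (sint_nonneg (l2 ++ simple_opp l1) (simple_app _ _ H2s (simple_simple_opp _ H1s))) as H.
  rewrite sint_app, sint_opp in H.
  enough (0 <= sint mu l2 + - sint mu l1) by lra.
  apply H. intros x Sx. rewrite sval_app, sval_opp. specialize (Hle x Sx). lra.
Qed.

Lemma integral_of_simple_approx f I :
  (forall e, 0 < e -> exists l, simple l /\ (forall x, S x -> Rabs (sval l x - f x) < e) /\
                                Rabs (sint mu l - I) <= e) ->
  integral S mu f I.
Proof.
  intros Happ.
  assert (Hshift : forall l c, simple l ->
            simple (l ++ [(c, fun _ => True)]) /\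
            (forall x, sval (l ++ [(c, fun _ => True)]) x = sval l x + c) /\
            sint mu (l ++ [(c, fun _ => True)]) = sint mu l + c).
  { intros l c Hl. split; [apply simple_app; auto; intros c' A [E|[]]; inversion E; apply borel_True|].
    split; [intros x; rewrite sval_app; simpl; rewrite indic_1; auto; lra|].
    rewrite sint_app; simpl. rewrite mu_True; auto. lra. }
  split.
  - intros l Hl Hle. apply Rnot_lt_le. intros Hlt. set (e := (sint mu l - I) / 3).
    destruct (Happ e ltac:(unfold e; lra)) as [g [Hg [Hgf HgI]]].
    destruct (Hshift g e Hg) as [Hs [Hv Hi]].
    pose proof (sint_mono l _ Hl Hs) as M. rewrite Hi in M.
    apply Rabs_le_inv in HgI. unfold e in *.
    enough (sint mu l <= sint mu g + (sint mu l - I) / 3) by lra.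
    apply M. intros x Sx. rewrite Hv. specialize (Hgf x Sx). specialize (Hle x Sx).
    apply Rabs_def2 in Hgf. lra.
  - intros l Hl Hle. apply Rnot_lt_le. intros Hlt. set (e := (I - sint mu l) / 3).
    destruct (Happ e ltac:(unfold e; lra)) as [g [Hg [Hgf HgI]]].
    destruct (Hshift g (- e) Hg) as [Hs [Hv Hi]].
    pose proof (sint_mono _ l Hs Hl) as M. rewrite Hi in M.
    apply Rabs_le_inv in HgI. unfold e in *.
    enough (sint mu g + - ((I - sint mu l) / 3) <= sint mu l) by lra.
    apply M. intros x Sx. rewrite Hv. specialize (Hgf x Sx). specialize (Hle x Sx).
    apply Rabs_def2 in Hgf. lra.
Qed.

End SimpleIntegral.

(* [n] terms, unlike [sum_f_R0 f n], which has [n + 1]. *)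
Fixpoint rsum (f : nat -> R) (n : nat) : R :=
  match n with 0%nat => 0 | S m => rsum f m + f m end.

Lemma sum_f_R0_rsum f n : sum_f_R0 f n = rsum f (S n).
Proof. induction n; simpl; [lra|]. rewrite IHn. reflexivity. Qed.

Lemma rsum_ext f g n : (forall i, (i < n)%nat -> f i = g i) -> rsum f n = rsum g n.
Proof.
  induction n; intros H; simpl; auto.
  rewrite IHn by (intros; apply H; lia). rewrite H by lia. reflexivity.
Qed.

Lemma rsum_split f a b : rsum f (a + b) = rsum f a + rsum (fun i => f (a + i)%nat) b.
Proof. induction b; simpl; [rewrite Nat.add_0_r; lra|]. rewrite Nat.add_succ_r; simpl. rewrite IHb; lra. Qed.

Lemma rsum_S_front f k : rsum f (S k) = f 0%nat + rsum (fun i => f (S i)) k.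
Proof. replace (S k) with (1 + k)%nat by lia. rewrite rsum_split. simpl. lra. Qed.

Lemma rsum_le f g n : (forall i, f i <= g i) -> rsum f n <= rsum g n.
Proof. intros H; induction n; simpl; [lra|]. specialize (H n); lra. Qed.

Lemma rsum_const c n : rsum (fun _ => c) n = INR n * c.
Proof. induction n; simpl rsum; [simpl; lra|]. rewrite IHn, S_INR; lra. Qed.

Lemma rsum_nonneg f n : (forall i, 0 <= f i) -> 0 <= rsum f n.
Proof. intros H. rewrite <- (Rmult_0_r (INR n)), <- rsum_const. apply rsum_le; auto. Qed.

Lemma rsum_le_n f n : (forall i, f i <= 1) -> rsum f n <= INR n.
Proof. intros H. rewrite <- (Rmult_1_r (INR n)), <- rsum_const. apply rsum_le; auto. Qed.

Lemma rsum_mono f n m : (forall i, 0 <= f i) -> (n <= m)%nat -> rsum f n <= rsum f m.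
Proof.
  intros H Hnm. replace m with (n + (m - n))%nat by lia. rewrite rsum_split.
  pose proof (rsum_nonneg (fun i => f (n + i)%nat) (m - n) ltac:(intros; apply H)). lra.
Qed.

Lemma rsum_scal c f n : rsum (fun i => c * f i) n = c * rsum f n.
Proof. induction n; simpl; try rewrite IHn; lra. Qed.

Lemma rsum_minus f g n : rsum (fun i => f i - g i) n = rsum f n - rsum g n.
Proof. induction n; simpl; try rewrite IHn; lra. Qed.

Lemma rsum_abs_le d n e : (forall j, Rabs (d j) <= e) -> Rabs (rsum d n) <= INR n * e.
Proof.
  intros H; induction n; simpl rsum; [simpl; rewrite Rabs_R0; lra|].
  rewrite S_INR. pose proof (Rabs_triang (rsum d n) (d n)). specialize (H n). lra.
Qed.

(** * The maximal inequality *)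

(* Cover [s, s + N) greedily: skip points where [g] vanishes, and jump over a
   block of length [k <= n] on which [h] has average above [c] elsewhere. *)
Lemma maximal_covering (h g : nat -> R) (c : R) (n : nat) :
  0 <= c -> (forall j, 0 <= h j) -> (forall j, 0 <= g j <= 1) ->
  (forall j, g j <> 0 -> exists k, (1 <= k <= n)%nat /\ c * INR k < rsum (fun i => h (j + i)%nat) k) ->
  forall N s, c * rsum (fun i => g (s + i)%nat) N <= rsum (fun i => h (s + i)%nat) (N + n).
Proof.
  intros Hc Hh Hg Hgood N. induction N as [N IH] using (well_founded_induction lt_wf). intros s.
  assert (Hshift : forall (f : nat -> R) a m,
            rsum (fun i => f (s + (a + i))%nat) m = rsum (fun i => f (s + a + i)%nat) m)
    by (intros; apply rsum_ext; intros; f_equal; lia).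
  destruct N as [|N'].
  - simpl. rewrite Rmult_0_r. apply rsum_nonneg; auto.
  - destruct (Req_dec (g s) 0) as [E|E].
    + specialize (IH N' ltac:(lia) (S s)).
      rewrite rsum_S_front, Nat.add_0_r, E, Rplus_0_l.
      replace (S N' + n)%nat with (S (N' + n)) by lia. rewrite (rsum_S_front (fun i => h (s + i)%nat)).
      rewrite (rsum_ext (fun i => g (s + S i)%nat) (fun i => g (S s + i)%nat)) by (intros; f_equal; lia).
      rewrite (rsum_ext (fun i => h (s + S i)%nat) (fun i => h (S s + i)%nat)) by (intros; f_equal; lia).
      pose proof (Hh (s + 0)%nat). lra.
    + destruct (Hgood s E) as [k [Hk Hck]].
      assert (Hgk : rsum (fun i => g (s + i)%nat) k <= INR k) by (apply rsum_le_n; intros; apply Hg).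
      destruct (le_lt_dec (S N') k) as [HkN|HkN].
      * assert (rsum (fun i => g (s + i)%nat) (S N') <= INR (S N')) by (apply rsum_le_n; intros; apply Hg).
        assert (INR (S N') <= INR k) by (apply le_INR; auto).
        assert (rsum (fun i => h (s + i)%nat) k <= rsum (fun i => h (s + i)%nat) (S N' + n))
          by (apply rsum_mono; auto; lia).
        assert (0 <= rsum (fun i => g (s + i)%nat) (S N')) by (apply rsum_nonneg; intros; apply Hg).
        nra.
      * specialize (IH (S N' - k)%nat ltac:(lia) (s + k)%nat).
        replace (S N') with (k + (S N' - k))%nat by lia. rewrite rsum_split.
        replace (k + (S N' - k) + n)%nat with (k + (S N' - k + n))%nat by lia.
        rewrite rsum_split, !Hshift. nra.
Qed.

Definition cnt (C : Seq -> Prop) (x : Seq) (k : nat) : R :=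
  rsum (fun i => indic C (shiftn i x)) k.

Definition early_excess (C : Seq -> Prop) (c : R) (n : nat) : Seq -> Prop :=
  fun y => exists k, (1 <= k <= n)%nat /\ c * INR k < cnt C y k.

Lemma indic_prefix_determined d C x y : prefix_determined d C -> agree d x y -> indic C x = indic C y.
Proof.
  intros H Hxy. unfold indic. specialize (H x y Hxy).
  do 2 destruct excluded_middle_informative; tauto.
Qed.

Lemma cnt_prefix_determined d C k x y : prefix_determined d C -> agree (k + d) x y ->
  cnt C x k = cnt C y k.
Proof.
  intros H Hxy. apply rsum_ext. intros i Hi. apply (indic_prefix_determined d); auto.
  intros i' Hi'. apply Hxy. lia.
Qed.

Lemma early_excess_prefix_determined d C c n : prefix_determined d C ->
  prefix_determined (n + d) (early_excess C c n).
Proof.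
  intros H x y Hxy.
  assert (Hk : forall k, (k <= n)%nat -> cnt C x k = cnt C y k)
    by (intros k Hk; apply (cnt_prefix_determined d); auto; intros i Hi; apply Hxy; lia).
  split; intros [k [Hk1 Hc]]; exists k; split; auto; [rewrite <- Hk | rewrite Hk]; auto; lia.
Qed.

Lemma cnt_S C x k : cnt C x (S k) = indic C x + cnt C (shiftn 1 x) k.
Proof.
  unfold cnt. rewrite rsum_S_front. reflexivity.
Qed.

Lemma cnt_compl C x k : cnt (fun y => ~ C y) x k = INR k - cnt C x k.
Proof. unfold cnt. induction k; simpl rsum; [simpl; lra|]. rewrite IHk, indic_compl, S_INR. lra. Qed.

Fixpoint shift_sum (c : R) (A : Seq -> Prop) (N : nat) : list (R * (Seq -> Prop)) :=
  match N with 0%nat => nil | S m => (c, fun x => A (shiftn m x)) :: shift_sum c A m end.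

Lemma sval_shift_sum c A N x : sval (shift_sum c A N) x = c * rsum (fun j => indic A (shiftn j x)) N.
Proof.
  induction N; simpl; [lra|]. rewrite IHN.
  change (indic (fun y => A (shiftn N y)) x) with (indic A (shiftn N x)). lra.
Qed.

Lemma mu_shift mu A j : invariant mu -> borel A -> mu (fun x => A (shiftn j x)) = mu A.
Proof.
  intros Hinv HA. induction j; [reflexivity|].
  rewrite <- IHj, <- (Hinv (fun x => A (shiftn j x))) by (apply borel_shift; auto).
  apply mu_ext. intros x. rewrite shiftn_shiftn. reflexivity.
Qed.

Lemma sint_shift_sum mu c A N : invariant mu -> borel A -> sint mu (shift_sum c A N) = c * INR N * mu A.
Proof. intros Hinv HA. induction N; simpl sint; [simpl; lra|]. rewrite IHN, mu_shift, S_INR; auto; lra. Qed.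

Lemma simple_shift_sum c A N : borel A -> simple (shift_sum c A N).
Proof.
  intros HA; induction N; intros c' A' Hin; simpl in Hin; [tauto|].
  destruct Hin as [E|E]; [inversion E; subst; apply borel_shift; auto | eapply IHN; eauto].
Qed.

(* Integrating [maximal_covering] along orbits of length [N] and letting [N] grow. *)
Lemma maximal_ineq mu d C c n : prob_measure mu -> invariant mu -> prefix_determined d C -> 0 <= c ->
  c * mu (early_excess C c n) <= mu C.
Proof.
  intros PM Hinv HC Hc.
  assert (BC : borel C) by (apply (borel_prefix_determined d); auto).
  assert (BB : borel (early_excess C c n))
    by (apply (borel_prefix_determined (n + d)), early_excess_prefix_determined; auto).
  assert (HN : forall N, c * INR N * mu (early_excess C c n) <= 1 * INR (N + n) * mu C).
  { intros N. rewrite <- !sint_shift_sum by auto.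
    apply (sint_mono mu (fun _ => True) PM borel_True (mu_True mu PM)); auto using simple_shift_sum.
    intros x _. rewrite !sval_shift_sum, Rmult_1_l.
    refine (maximal_covering (fun j => indic C (shiftn j x))
              (fun j => indic (early_excess C c n) (shiftn j x)) c n Hc
              (fun j => proj1 (indic_range C (shiftn j x)))
              (fun j => indic_range _ (shiftn j x)) _ N 0%nat).
    intros j Hj. unfold indic in Hj.
    destruct excluded_middle_informative as [[k [Hk Hck]]|]; [|lra].
    exists k; split; auto. unfold cnt in Hck.
    rewrite (rsum_ext _ (fun i => indic C (shiftn i (shiftn j x)))); auto.
    intros; rewrite shiftn_shiftn; reflexivity. }
  apply Rnot_lt_le; intro Hlt.
  destruct (INR_archimed (c * mu (early_excess C c n) - mu C) (INR n * mu C) ltac:(lra)) as [N HN'].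
  specialize (HN N). rewrite plus_INR in HN. lra.
Qed.

(** * The ergodic theorem for sets determined by finitely many coordinates *)

(* [often_above b u] says [limsup u k / k >= b], quantified over countably
   many tolerances [/ (m + 1)] so that the corresponding set of points is Borel. *)
Definition often_above (b : R) (u : nat -> R) : Prop :=
  forall m M : nat, exists k, (M <= k)%nat /\ (b - / (INR m + 1)) * INR k < u k.

Definition freq_limsup_ge (C : Seq -> Prop) (b : R) (x : Seq) : Prop := often_above b (cnt C x).

Lemma inv_INR_half m : / (INR (2 * m + 1) + 1) = / 2 * / (INR m + 1).
Proof. rewrite plus_INR, mult_INR. simpl INR. rewrite <- Rinv_mult. f_equal. lra. Qed.

Lemma archimedean_slack b e : 0 < e ->
  exists K0, forall k, (K0 <= k)%nat -> 1 + Rabs b + e <= e / 2 * INR k.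
Proof.
  intros He. destruct (INR_archimed (e / 2) (1 + Rabs b + e) ltac:(lra)) as [K0 HK0].
  exists K0. intros k Hk. pose proof (le_INR _ _ Hk). nra.
Qed.

Lemma often_above_shift b u v : (forall k, Rabs (u (S k) - v k) <= 1) ->
  (often_above b u <-> often_above b v).
Proof.
  intros Huv. pose proof (Rle_abs b) as Hb1. pose proof (Rle_abs (- b)) as Hb2.
  rewrite Rabs_Ropp in Hb2.
  split; intros H m M;
    set (e := / (INR m + 1));
    assert (He : 0 < e) by (apply Rinv_0_lt_compat; pose proof (pos_INR m); lra);
    destruct (archimedean_slack b e He) as [K0 HK0].
  - destruct (H (2 * m + 1)%nat (S (M + K0))) as [[|k] [Hk Hc]]; [lia|].
    rewrite inv_INR_half in Hc. fold e in Hc. exists k. split; [lia|].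
    specialize (HK0 k ltac:(lia)). specialize (Huv k). apply Rabs_le_inv in Huv.
    rewrite S_INR in Hc. nra.
  - destruct (H (2 * m + 1)%nat (M + K0)%nat) as [k [Hk Hc]].
    rewrite inv_INR_half in Hc. fold e in Hc. exists (S k). split; [lia|].
    specialize (HK0 k ltac:(lia)). specialize (Huv k). apply Rabs_le_inv in Huv. rewrite S_INR. nra.
Qed.

Lemma freq_limsup_ge_shift C b x : freq_limsup_ge C b (shiftn 1 x) <-> freq_limsup_ge C b x.
Proof.
  symmetry. apply often_above_shift. intros k. rewrite cnt_S.
  replace (indic C x + cnt C (shiftn 1 x) k - cnt C (shiftn 1 x) k) with (indic C x) by ring.
  pose proof (indic_range C x). rewrite Rabs_right; lra.
Qed.

Lemma borel_freq_limsup_ge d C b : prefix_determined d C -> borel (freq_limsup_ge C b).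
Proof.
  intros HC. apply borel_inter_count; intros m. apply borel_inter_count; intros M.
  apply borel_union; intros k. apply (borel_prefix_determined (k + d)).
  intros x y Hxy. rewrite (cnt_prefix_determined d C k x y); tauto.
Qed.

(* By ergodicity the invariant set has measure 0 or 1; measure 1 would make some
   [early_excess C c n], with [c > mu C], have measure close to 1, against the maximal inequality. *)
Lemma freq_limsup_above_mean_null mu S d C delta : prob_measure mu -> invariant mu ->
  ergodic_on S mu -> prefix_determined d C -> 0 < delta ->
  mu (freq_limsup_ge C (mu C + delta)) = 0.
Proof.
  intros PM Hinv Herg HC Hd.
  assert (BC : borel C) by (apply (borel_prefix_determined d); auto).
  pose proof (mu_ge0 mu PM C BC) as Ha0. set (a := mu C) in *.
  assert (BE : forall c n, borel (early_excess C c n))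
    by (intros; apply (borel_prefix_determined (n + d)), early_excess_prefix_determined; auto).
  destruct (Herg (freq_limsup_ge C (a + delta)) (borel_freq_limsup_ge d C _ HC)
              ltac:(intros x _; apply freq_limsup_ge_shift)) as [E|E]; auto.
  exfalso.
  destruct (archimed_cor1 delta Hd) as [N [HN HN0]].
  set (m := (N - 1)%nat). assert (Hm : INR m + 1 = INR N) by (unfold m; rewrite <- S_INR; f_equal; lia).
  set (c := a + delta - / (INR m + 1)). assert (Hc : a < c) by (unfold c; rewrite Hm; lra).
  assert (Hu : 1 <= mu (fun x => exists n, early_excess C c n x)).
  { rewrite <- E. apply (mu_mono mu PM); [apply (borel_freq_limsup_ge d); auto | apply borel_union; auto |].
    intros x Hx. destruct (Hx m 1%nat) as [k [Hk Hck]]. exists k, k. split; [lia | auto]. }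
  destruct (mu_increasing_union_approx mu PM (early_excess C c) (BE c)
              ltac:(intros n x [k [Hk Hck]]; exists k; split; auto; lia) (a / c)) as [n Hn].
  { apply Rlt_le_trans with 1; auto. apply Rmult_lt_reg_r with c; [lra|].
    unfold Rdiv. rewrite Rmult_assoc, Rinv_l by lra. lra. }
  pose proof (maximal_ineq mu d C c n PM Hinv HC ltac:(lra)).
  apply (Rmult_lt_compat_l c) in Hn; [|lra].
  replace (c * (a / c)) with a in Hn by (field; lra). fold a in H. lra.
Qed.

Lemma not_often_above_bound b u : ~ often_above b u ->
  exists M, forall k, (M <= k)%nat -> u k <= b * INR k.
Proof.
  intros H. apply not_all_ex_not in H. destruct H as [m H]. apply not_all_ex_not in H. destruct H as [M H].
  exists M. intros k Hk. apply Rnot_lt_le. intros Hc. apply H. exists k. split; auto.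
  assert (0 < / (INR m + 1)) by (apply Rinv_0_lt_compat; pose proof (pos_INR m); lra).
  pose proof (pos_INR k). nra.
Qed.

Lemma Un_cv_freq_of_not_often_above a u :
  (forall j, ~ often_above (a + / (INR j + 1)) u) ->
  (forall j, ~ often_above (1 - a + / (INR j + 1)) (fun k => INR k - u k)) ->
  Un_cv (fun n => u (S n) / INR (S n)) a.
Proof.
  intros H1 H2 eps Heps.
  destruct (archimed_cor1 eps Heps) as [N [HN HN0]].
  set (j := (N - 1)%nat). assert (Hj : INR j + 1 = INR N) by (unfold j; rewrite <- S_INR; f_equal; lia).
  destruct (not_often_above_bound _ _ (H1 j)) as [M1 HM1].
  destruct (not_often_above_bound _ _ (H2 j)) as [M2 HM2].
  rewrite Hj in HM1, HM2.
  exists (M1 + M2)%nat. intros n Hn. unfold Rdist.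
  specialize (HM1 (S n) ltac:(lia)). specialize (HM2 (S n) ltac:(lia)). cbv beta in HM2.
  assert (HS : 0 < INR (S n)) by (apply lt_0_INR; lia).
  assert (HNi : 0 < / INR N) by (apply Rinv_0_lt_compat, lt_0_INR; lia).
  apply Rabs_def1.
  - apply Rle_lt_trans with (/ INR N); [|lra].
    apply Rmult_le_reg_r with (INR (S n)); auto.
    unfold Rdiv. rewrite Rmult_minus_distr_r, Rmult_assoc, Rinv_l by lra. nra.
  - apply Rlt_le_trans with (- / INR N); [lra|].
    apply Rmult_le_reg_r with (INR (S n)); auto.
    unfold Rdiv. rewrite Rmult_minus_distr_r, Rmult_assoc, Rinv_l by lra. nra.
Qed.

Definition freq_exceptional (mu : (Seq -> Prop) -> R) (C : Seq -> Prop) : Seq -> Prop :=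
  fun x => exists j, freq_limsup_ge C (mu C + / (INR j + 1)) x \/
                     freq_limsup_ge (fun y => ~ C y) (mu (fun y => ~ C y) + / (INR j + 1)) x.

Lemma freq_cv_off_exceptional mu C x : borel C -> prob_measure mu -> ~ freq_exceptional mu C x ->
  Un_cv (fun n => cnt C x (S n) / INR (S n)) (mu C).
Proof.
  intros BC PM Hx. apply Un_cv_freq_of_not_often_above.
  - intros j Hc. apply Hx. exists j. left; exact Hc.
  - intros j Hc. apply Hx. exists j. right. rewrite mu_compl by auto.
    unfold freq_limsup_ge.
    replace (cnt (fun y => ~ C y) x) with (fun k => INR k - cnt C x k)
      by (apply functional_extensionality; intros k; rewrite cnt_compl; reflexivity).
    exact Hc.
Qed.

Lemma freq_exceptional_null mu S d C : prob_measure mu -> invariant mu -> ergodic_on S mu ->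
  prefix_determined d C -> borel (freq_exceptional mu C) /\ mu (freq_exceptional mu C) = 0.
Proof.
  intros PM Hinv Herg HC.
  assert (HCc : prefix_determined d (fun y => ~ C y))
    by (intros x y Hxy; pose proof (HC x y Hxy); tauto).
  assert (HB : forall b1 b2, borel (fun x => freq_limsup_ge C b1 x \/
                                             freq_limsup_ge (fun y => ~ C y) b2 x))
    by (intros; apply borel_union2; eapply borel_freq_limsup_ge; eauto).
  split; [apply borel_union; auto|].
  apply mu_null_union; auto. intros j.
  apply mu_null_union2; auto; try (eapply borel_freq_limsup_ge; eauto);
    eapply freq_limsup_above_mean_null; eauto; apply Rinv_0_lt_compat; pose proof (pos_INR j); lra.
Qed.

Lemma Xbeta_iff beta x : Xbeta beta x <-> forall n, exists b, Xbeta0 beta b /\ agree n x b.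
Proof.
  split.
  - intros H n. destruct (H ((/2)^n) (half_pow_pos n)) as [b [Hb Hr]]. exists b; split; auto.
    intros i Hi. apply (agree_of_rho_lt x b n Hr); lia.
  - intros H eps He. destruct (half_pow_small eps He) as [L HL]. destruct (H L) as [b [Hb Ha]].
    exists b; split; auto. pose proof (rho_le_of_agree x b L Ha). lra.
Qed.

Lemma Xbeta_bound beta x i : Xbeta beta x -> (x i <= Z.to_nat (rfloor beta))%nat.
Proof. rewrite Xbeta_iff. intros H. destruct (H (S i)) as [b [[Hb _] Ha]]. rewrite Ha by lia. auto. Qed.

Lemma Xbeta_shift beta x j : Xbeta beta x -> Xbeta beta (shiftn j x).
Proof.
  rewrite !Xbeta_iff. intros H n. destruct (H (j + n)%nat) as [b [[Hb1 Hb2] Ha]].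
  exists (shiftn j b). split.
  - split; [intros i; apply Hb1 | intros k; rewrite shiftn_shiftn; apply Hb2].
  - intros i Hi. apply Ha. lia.
Qed.

Lemma Xbeta_closed beta x : (forall n, exists z, Xbeta beta z /\ agree n x z) -> Xbeta beta x.
Proof.
  intros H. rewrite Xbeta_iff. intros n. destruct (H n) as [z [Hz Ha]]. rewrite Xbeta_iff in Hz.
  destruct (Hz n) as [b [Hb Hb']]. exists b. split; auto. intros i Hi. rewrite Ha, Hb'; auto.
Qed.

Lemma borel_Xbeta beta : borel (Xbeta beta).
Proof.
  apply (borel_ext (fun x => forall n, exists b, Xbeta0 beta b /\ agree n x b)).
  - apply (borel_inter_count (fun n x => exists b, Xbeta0 beta b /\ agree n x b)). intros n.
    apply (borel_prefix_determined n). intros x y Hxy.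
    split; intros [b [Hb Ha]]; exists b; split; auto; intros i Hi; rewrite <- Ha; auto.
    symmetry; apply Hxy; auto.
  - intros x. rewrite Xbeta_iff. tauto.
Qed.

Lemma exists_last_nonzero (f : nat -> nat) M : (exists n, f n <> 0%nat) ->
  (forall i, (M <= i)%nat -> f i = 0%nat) -> exists k, f k <> 0%nat /\ forall j, (k < j)%nat -> f j = 0%nat.
Proof.
  intros [n Hn]; revert f Hn; induction M; intros f Hn HM; [specialize (HM n); lia|].
  destruct (Nat.eq_dec (f M) 0) as [E|E].
  - apply IHM; auto. intros i Hi. destruct (Nat.eq_dec i M); [subst; exact E | apply HM; lia].
  - exists M. split; [exact E|]. intros j Hj; apply HM; lia.
Qed.

(* Either [d_beta] is finite and [dhat] is periodic, or [d_beta] has infinitely many nonzero digits. *)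
Lemma dhat_pos_infinitely_often beta : (exists n, (0 < dhat beta n)%nat) ->
  forall M, exists i, (M <= i)%nat /\ (0 < dhat beta i)%nat.
Proof.
  intros [n Hn] M. unfold dhat in *. destruct excluded_middle_informative as [H|H].
  - destruct (constructive_indefinite_description (last_nonzero beta) H) as [k Hk]. simpl in *.
    destruct Hk as [Hk1 _]. exists (n + M * k)%nat. split; [nia|]. rewrite Nat.Div0.mod_add. auto.
  - apply NNPP. intros Hc. apply H.
    destruct (exists_last_nonzero (fun i => dexp beta (i + 1)) M) as [k [Hk Hlast]].
    + exists n; lia.
    + intros i Hi. destruct (Nat.eq_dec (dexp beta (i + 1)) 0); auto.
      exfalso; apply Hc. exists i; split; auto; lia.
    + exists (k + 1)%nat. split; [lia|]. split; auto. intros j Hj.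
      replace j with (j - 1 + 1)%nat by lia. apply Hlast. lia.
Qed.

Lemma dhat_pos_of_Xbeta beta x : Xbeta beta x -> exists n, (0 < dhat beta n)%nat.
Proof.
  rewrite Xbeta_iff. intros H. destruct (H 0%nat) as [b [[_ Hb] _]].
  destruct (Hb 0%nat) as [n [_ Hn]]. exists n. lia.
Qed.

(** * Closeability *)

Fixpoint path_vertex (beta : R) (x : Seq) (t : nat) : nat :=
  match t with
  | 0%nat => 0%nat
  | S t' => if Nat.eqb (x t') (dhat beta (path_vertex beta x t')) then S (path_vertex beta x t') else 0%nat
  end.

Lemma path_vertex_spec beta x t : (path_vertex beta x t <= t)%nat /\
  forall i, (i < path_vertex beta x t)%nat -> x (t - path_vertex beta x t + i)%nat = dhat beta i.
Proof.
  induction t as [|t [IH1 IH2]]; simpl; [split; [lia | intros; lia]|].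
  destruct (Nat.eqb_spec (x t) (dhat beta (path_vertex beta x t))) as [E|E]; split; try lia.
  intros i Hi. destruct (Nat.eq_dec i (path_vertex beta x t)) as [Ei|Ei].
  - subst i. replace (t - path_vertex beta x t + path_vertex beta x t)%nat with t by lia. auto.
  - apply IH2. lia.
Qed.

(* At vertex [v_m] the last [m] digits read are [dhat 0 .. dhat (m - 1)], so the
   lexicographic condition on the next digit is exactly [x t <= dhat m]. *)
Lemma path_vertex_digit_le beta x t : Xbeta beta x -> (x t <= dhat beta (path_vertex beta x t))%nat.
Proof.
  intros H. destruct (path_vertex_spec beta x t) as [H1 H2]. set (m := path_vertex beta x t) in *.
  rewrite Xbeta_iff in H. destruct (H (S t)) as [b [[_ Hb] Ha]].
  destruct (Hb (t - m)%nat) as [n [Hn1 Hn2]]. unfold shiftn in *.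
  destruct (Nat.lt_total n m) as [Hl|[Hl|Hl]].
  - exfalso. rewrite <- Ha in Hn2 by lia. rewrite H2 in Hn2 by auto. lia.
  - subst n. replace (t - m + m)%nat with t in Hn2 by lia. rewrite Ha by lia. lia.
  - specialize (Hn1 m Hl). replace (t - m + m)%nat with t in Hn1 by lia. rewrite Ha by lia. lia.
Qed.

Lemma path_vertex_edge beta x t : Xbeta beta x ->
  Gedge beta (path_vertex beta x t) (path_vertex beta x (S t)) (x t).
Proof.
  intros H. pose proof (path_vertex_digit_le beta x t H). unfold Gedge. simpl.
  destruct (Nat.eqb_spec (x t) (dhat beta (path_vertex beta x t))); [left | right]; split; auto; lia.
Qed.

(* A time at which the path can be closed: it is at [v_0], or it can return to [v_0] with label [0]. *)
Definition closing_time beta x T : Prop :=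
  (path_vertex beta x T = 0%nat /\ (1 <= T)%nat) \/ (0 < dhat beta (path_vertex beta x T))%nat.

Lemma exists_closing_time beta x T0 : Xbeta beta x -> exists T, (T0 <= T)%nat /\ closing_time beta x T.
Proof.
  intros HX. destruct (classic (exists t, (T0 <= t)%nat /\ path_vertex beta x (S t) = 0%nat))
    as [[t [Ht Hv]]|Hno].
  - exists (S t). split; [lia|]. left; split; auto; lia.
  - assert (Hs : forall i, path_vertex beta x (T0 + i) = (path_vertex beta x T0 + i)%nat).
    { induction i; [rewrite !Nat.add_0_r; auto|]. replace (T0 + S i)%nat with (S (T0 + i)) by lia.
      assert (path_vertex beta x (S (T0 + i)) <> 0%nat)
        by (intro; apply Hno; exists (T0 + i)%nat; split; auto; lia).
      simpl in H |- *. destruct (Nat.eqb _ _); [|lia]. rewrite IHi. lia. }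
    destruct (dhat_pos_infinitely_often beta (dhat_pos_of_Xbeta beta x HX) (path_vertex beta x T0))
      as [i [Hi Hpos]].
    exists (T0 + (i - path_vertex beta x T0))%nat. split; [lia|]. right. rewrite Hs.
    replace (path_vertex beta x T0 + (i - path_vertex beta x T0))%nat with i by lia. auto.
Qed.

Definition truncate (x : Seq) (T : nat) : Seq := fun i => if Nat.ltb i T then x i else 0%nat.

Lemma PerG_truncate beta x T r : Xbeta beta x ->
  (r = 0%nat /\ path_vertex beta x T = 0%nat /\ (1 <= T)%nat) \/
  (r = 1%nat /\ (0 < dhat beta (path_vertex beta x T))%nat) ->
  PerG beta (fun i => truncate x T (i mod (T + r))).
Proof.
  intros HX Hr.
  exists (fun i => if Nat.leb i T then path_vertex beta x i else 0%nat), (truncate x T), (T + r)%nat.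
  split; [destruct Hr as [[-> [_ HT]]|[-> _]]; lia|]. split.
  - destruct Hr as [[-> [Hv _]]|[-> _]].
    + rewrite Nat.add_0_r, Nat.leb_refl, Hv. reflexivity.
    + replace (Nat.leb (T + 1) T) with false by (symmetry; apply Nat.leb_gt; lia). reflexivity.
  - split; [|reflexivity]. intros i Hi. unfold truncate. destruct (Nat.ltb_spec i T).
    + replace (Nat.leb i T) with true by (symmetry; apply Nat.leb_le; lia).
      replace (Nat.leb (S i) T) with true by (symmetry; apply Nat.leb_le; lia).
      apply path_vertex_edge; auto.
    + destruct Hr as [[-> _]|[-> Hpos]]; [lia|]. assert (i = T) by lia. subst i.
      rewrite Nat.leb_refl. replace (Nat.leb (S T) T) with false by (symmetry; apply Nat.leb_gt; lia).
      right. split; auto.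
Qed.

Theorem Xbeta_closeable beta x : Xbeta beta x -> closeable (PerG beta) x.
Proof.
  intros HX eps N Heps HN.
  destruct (half_pow_small eps Heps) as [L HL].
  destruct (INR_archimed eps (1 + INR L + eps * INR L) Heps) as [K HK].
  destruct (exists_closing_time beta x (K + N + L + 1) HX) as [T [HT Hclose]].
  assert (Hr : exists r, (r = 0%nat /\ path_vertex beta x T = 0%nat /\ (1 <= T)%nat) \/
                         (r = 1%nat /\ (0 < dhat beta (path_vertex beta x T))%nat))
    by (destruct Hclose; [exists 0%nat | exists 1%nat]; auto).
  destruct Hr as [r Hr].
  assert (Hr1 : (r <= 1)%nat) by (destruct Hr as [[-> _]|[-> _]]; lia).
  exists (T - L)%nat, (T + r)%nat, (fun i => truncate x T (i mod (T + r))).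
  split; [lia|]. split; [lia|]. split.
  - rewrite minus_INR, plus_INR by lia.
    assert (INR r <= 1) by (apply (le_INR r 1); auto).
    assert (INR K <= INR T) by (apply le_INR; lia). nra.
  - split; [|split; [apply PerG_truncate; auto|]].
    + intros j Hj. eapply Rle_lt_trans; [|apply HL]. apply rho_le_of_agree. intros i Hi.
      unfold shiftn, truncate. rewrite Nat.mod_small by lia.
      destruct (Nat.ltb_spec (j + i) T); auto. lia.
    + intros i. f_equal. replace (T + r + i)%nat with (i + 1 * (T + r))%nat by lia. apply Nat.Div0.mod_add.
Qed.

Fixpoint lsum {A : Type} (l : list A) (f : A -> R) : R :=
  match l with nil => 0 | a :: l' => f a + lsum l' f end.

Lemma lsum_app {A} (l1 l2 : list A) f : lsum (l1 ++ l2) f = lsum l1 f + lsum l2 f.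
Proof. induction l1; simpl; try rewrite IHl1; lra. Qed.

Lemma lsum_map {A B} (g : A -> B) l f : lsum (map g l) f = lsum l (fun a => f (g a)).
Proof. induction l; simpl; try rewrite IHl; lra. Qed.

Lemma lsum_flat_map {A B} (g : A -> list B) l f : lsum (flat_map g l) f = lsum l (fun a => lsum (g a) f).
Proof. induction l; simpl; try rewrite lsum_app, IHl; lra. Qed.

Lemma lsum_ext {A} (l : list A) f g : (forall a, In a l -> f a = g a) -> lsum l f = lsum l g.
Proof.
  induction l; intros H; simpl; auto.
  rewrite IHl by (intros; apply H; right; auto). rewrite H by (left; auto). reflexivity.
Qed.

Lemma lsum_0 {A} (l : list A) : lsum l (fun _ => 0) = 0.
Proof. induction l; simpl; try rewrite IHl; lra. Qed.

Lemma lsum_plus {A} (l : list A) f g : lsum l (fun a => f a + g a) = lsum l f + lsum l g.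
Proof. induction l; simpl; try rewrite IHl; lra. Qed.

Lemma lsum_scal {A} (l : list A) c f : lsum l (fun a => c * f a) = c * lsum l f.
Proof. induction l; simpl; try rewrite IHl; lra. Qed.

Lemma lsum_seq_pick (x0 n : nat) (g : nat -> R) : (x0 < n)%nat ->
  lsum (seq 0 n) (fun a => if Nat.eq_dec x0 a then g a else 0) = g x0.
Proof.
  induction n; intros H; [lia|]. rewrite seq_S, lsum_app. simpl.
  destruct (Nat.eq_dec x0 n) as [<-|Hne].
  - rewrite (lsum_ext _ _ (fun _ => 0)), lsum_0; [lra|].
    intros a Ha. apply in_seq in Ha. destruct Nat.eq_dec; auto; lia.
  - rewrite IHn by lia. lra.
Qed.

Lemma rsum_lsum {A} (l : list A) (F : A -> nat -> R) n :
  rsum (fun j => lsum l (fun a => F a j)) n = lsum l (fun a => rsum (F a) n).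
Proof. induction n; simpl; [rewrite lsum_0; reflexivity|]. rewrite IHn, <- lsum_plus. reflexivity. Qed.

Lemma Un_cv_const c : Un_cv (fun _ => c) c.
Proof. intros e He. exists 0%nat. intros. unfold Rdist. rewrite Rminus_diag, Rabs_R0. lra. Qed.

Lemma Un_cv_lsum {A} (l : list A) (u : A -> nat -> R) (v : A -> R) :
  (forall a, In a l -> Un_cv (u a) (v a)) -> Un_cv (fun n => lsum l (fun a => u a n)) (lsum l v).
Proof.
  induction l; intros H; simpl; [apply Un_cv_const|].
  apply CV_plus; [apply H; left; auto | apply IHl; intros; apply H; right; auto].
Qed.

Fixpoint words (B L : nat) : list (list nat) :=
  match L with
  | 0%nat => [[]]
  | S L' => flat_map (fun a => map (cons a) (words B L')) (seq 0 (S B))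
  end.

Definition cylinder (w : list nat) : Seq -> Prop :=
  fun x => forall i, (i < length w)%nat -> x i = nth i w 0%nat.

Fixpoint prefix_word (L : nat) (x : Seq) : list nat :=
  match L with 0%nat => [] | S L' => x 0%nat :: prefix_word L' (shiftn 1 x) end.

Lemma nth_prefix_word L : forall x i, (i < L)%nat -> nth i (prefix_word L x) 0%nat = x i.
Proof. induction L; intros x i Hi; [lia|]. destruct i; simpl; auto. rewrite IHL by lia. reflexivity. Qed.

Lemma prefix_determined_cylinder w : prefix_determined (length w) (cylinder w).
Proof.
  intros x y Hxy. unfold cylinder. split; intros H i Hi; rewrite <- H; auto. symmetry; apply Hxy; auto.
Qed.

Lemma borel_cylinder w : borel (cylinder w).
Proof. exact (borel_prefix_determined _ _ (prefix_determined_cylinder w)). Qed.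

Lemma cylinder_cons a w x : cylinder (a :: w) x <-> x 0%nat = a /\ cylinder w (shiftn 1 x).
Proof.
  unfold cylinder, shiftn; simpl. split.
  - intros H. split; [apply (H 0%nat); lia|]. intros i Hi. apply (H (S i)); lia.
  - intros [H1 H2] [|i] Hi; auto. apply H2; lia.
Qed.

(* Exactly one cylinder of length [L] contains a point over the alphabet [{0, ..., B}]. *)
Lemma lsum_words_indic B L : forall (h : list nat -> R) x, (forall i, (x i <= B)%nat) ->
  lsum (words B L) (fun w => h w * indic (cylinder w) x) = h (prefix_word L x).
Proof.
  induction L; intros h x Hx; cbn [words prefix_word].
  - simpl. rewrite indic_1; [lra|]. intros i Hi; simpl in Hi; lia.
  - rewrite lsum_flat_map.
    rewrite (lsum_ext _ _ (fun a => if Nat.eq_dec (x 0%nat) a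
                                   then h (x 0%nat :: prefix_word L (shiftn 1 x)) else 0)).
    + rewrite lsum_seq_pick; auto. specialize (Hx 0%nat); lia.
    + intros a Ha. rewrite lsum_map. destruct Nat.eq_dec as [E|E].
      * subst a. rewrite <- (IHL (fun w => h (x 0%nat :: w)) (shiftn 1 x)) by (intros; apply Hx).
        apply lsum_ext. intros w _. f_equal. unfold indic.
        do 2 destruct excluded_middle_informative; auto; exfalso.
        -- apply n. apply cylinder_cons in c; tauto.
        -- apply n. apply cylinder_cons; auto.
      * rewrite (lsum_ext _ _ (fun _ => 0)), lsum_0; auto.
        intros w _. rewrite indic_0; [lra|]. intros Hc. apply cylinder_cons in Hc. tauto.
Qed.

Definition word_simple (h : list nat -> R) (ws : list (list nat)) : list (R * (Seq -> Prop)) :=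
  map (fun w => (h w, cylinder w)) ws.

Lemma sval_word_simple h ws x : sval (word_simple h ws) x = lsum ws (fun w => h w * indic (cylinder w) x).
Proof. induction ws; simpl; auto. rewrite IHws; auto. Qed.

Lemma sint_word_simple mu h ws : sint mu (word_simple h ws) = lsum ws (fun w => h w * mu (cylinder w)).
Proof. induction ws; simpl; auto. rewrite IHws; auto. Qed.

Lemma simple_word_simple h ws : simple (word_simple h ws).
Proof.
  intros c A Hin. apply in_map_iff in Hin. destruct Hin as [w [E _]]. inversion E; subst.
  apply borel_cylinder.
Qed.

Definition birkhoff_avg (f : Seq -> R) (x : Seq) (n : nat) : R :=
  sum_f_R0 (fun j => f (shiftn j x)) n / INR (n + 1).

Lemma birkhoff_avg_indic C x n : birkhoff_avg (indic C) x n = cnt C x (S n) / INR (S n).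
Proof. unfold birkhoff_avg. rewrite sum_f_R0_rsum, Nat.add_1_r. reflexivity. Qed.

Definition freq_typical (mu : (Seq -> Prop) -> R) (B : nat) (x : Seq) : Prop :=
  forall L w, In w (words B L) -> Un_cv (birkhoff_avg (indic (cylinder w)) x) (mu (cylinder w)).

(* Only countably many words are involved, so the exceptional sets form a null union. *)
Theorem exists_freq_typical_point mu beta : prob_measure mu -> invariant mu ->
  ergodic_on (Xbeta beta) mu -> mu (Xbeta beta) = 1 ->
  exists x, Xbeta beta x /\ freq_typical mu (Z.to_nat (rfloor beta)) x.
Proof.
  intros PM Hinv Herg HX. set (B := Z.to_nat (rfloor beta)).
  set (bad := fun x => exists L i, freq_exceptional mu (cylinder (nth i (words B L) [])) x).
  assert (Hnull : forall w, borel (freq_exceptional mu (cylinder w)) /\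
                            mu (freq_exceptional mu (cylinder w)) = 0)
    by (intros w; eapply freq_exceptional_null; eauto; apply prefix_determined_cylinder).
  assert (Hbad : borel bad /\ mu bad = 0).
  { split.
    - apply borel_union; intros L; apply borel_union; intros i; apply Hnull.
    - apply (mu_null_union mu PM).
      + intros L; apply borel_union; intros i; apply Hnull.
      + intros L; apply (mu_null_union mu PM); intros i; apply Hnull. }
  destruct Hbad as [Hbad0 Hbad1].
  destruct (mu_pos_nonempty mu PM (fun x => Xbeta beta x /\ ~ bad x)) as [x [Hx Hnx]].
  { rewrite mu_inter_full; auto using borel_compl, borel_Xbeta; [lra|]. rewrite mu_compl; auto; lra. }
  exists x. split; auto. intros L w Hw.
  destruct (In_nth _ _ [] Hw) as [i [Hi Ei]].
  apply (Un_cv_ext (fun n => cnt (cylinder w) x (S n) / INR (S n)));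
    [intros; rewrite birkhoff_avg_indic; auto|].
  apply freq_cv_off_exceptional; auto using borel_cylinder.
  intros Hc; apply Hnx; exists L, i; rewrite Ei; auto.
Qed.

Lemma eventually_forall_le (P : nat -> nat -> Prop) :
  (forall a, exists Ma, forall L, (Ma <= L)%nat -> P a L) ->
  forall B, exists M, forall a, (a <= B)%nat -> forall L, (M <= L)%nat -> P a L.
Proof.
  intros H B. induction B.
  - destruct (H 0%nat) as [M HM]. exists M. intros a Ha. replace a with 0%nat by lia. auto.
  - destruct IHB as [M1 HM1]. destruct (H (S B)) as [M2 HM2]. exists (M1 + M2)%nat.
    intros a Ha L HL. destruct (Nat.eq_dec a (S B)); [subst; apply HM2 | apply HM1]; lia.
Qed.

(* Koenig's lemma: extend a word, one letter at a time, keeping it a prefix of infinitely many [X L]. *)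
Lemma bounded_cluster_point (B : nat) (X : nat -> Seq) : (forall L i, (X L i <= B)%nat) ->
  exists z, forall K M, exists L, (M <= L)%nat /\ agree K z (X L).
Proof.
  intros HB.
  set (often := fun p => forall M, exists L, (M <= L)%nat /\ cylinder p (X L)).
  assert (Hext : forall p, often p -> exists a, often (p ++ [a])).
  { intros p Hp. apply NNPP. intros Hn.
    destruct (eventually_forall_le (fun a L => ~ cylinder (p ++ [a]) (X L))) with (B := B) as [M HM].
    { intros a. apply NNPP; intros Hc. apply Hn. exists a. intros M. apply NNPP; intros Hc'.
      apply Hc. exists M. intros L HL Hpr. apply Hc'. exists L; auto. }
    destruct (Hp M) as [L [HL Hpr]].
    apply (HM (X L (length p)) (HB L _) L HL).
    intros i Hi. rewrite length_app in Hi. simpl in Hi. destruct (Nat.lt_ge_cases i (length p)).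
    - rewrite app_nth1 by auto. apply Hpr; auto.
    - replace i with (length p) by lia. rewrite app_nth2, Nat.sub_diag by lia. reflexivity. }
  set (next := fun p => epsilon (inhabits 0%nat) (fun a => often (p ++ [a]))).
  set (pp := fix pp n := match n with 0%nat => [] | S n' => pp n' ++ [next (pp n')] end).
  assert (Hpp : forall n, often (pp n) /\ length (pp n) = n).
  { induction n as [|n [I1 I2]]; simpl.
    - split; auto. intros M; exists M; split; auto. intros i Hi; simpl in Hi; lia.
    - split; [apply (epsilon_spec (inhabits 0%nat) (fun a => often (pp n ++ [a]))), Hext; auto|].
      rewrite length_app, I2; simpl; lia. }
  exists (fun i => nth i (pp (S i)) 0%nat).
  assert (Hz : forall n i, (i < n)%nat -> nth i (pp n) 0%nat = nth i (pp (S i)) 0%nat).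
  { intros n i Hi. induction Hi; [reflexivity|].
    rewrite <- IHHi. simpl. rewrite app_nth1; auto. rewrite (proj2 (Hpp m)); lia. }
  intros K M. destruct (proj1 (Hpp K) M) as [L [HL Hpr]]. exists L. split; auto.
  intros i Hi. rewrite Hpr by (rewrite (proj2 (Hpp K)); auto). symmetry. apply Hz; auto.
Qed.

Lemma Xbeta_uniformly_continuous beta f : continuous_on (Xbeta beta) f -> forall eps, 0 < eps ->
  exists L, forall x y, Xbeta beta x -> Xbeta beta y -> agree L x y -> Rabs (f x - f y) < eps.
Proof.
  intros Hf eps Heps. apply NNPP. intros Hno.
  assert (H : forall L, exists x, Xbeta beta x /\
                exists y, Xbeta beta y /\ agree L x y /\ eps <= Rabs (f x - f y)).
  { intros L. apply NNPP; intros Hc. apply Hno. exists L. intros x y Hx Hy Ha.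
    apply Rnot_le_lt. intros Hle. apply Hc. eauto 6. }
  destruct (choice _ H) as [X HX].
  destruct (bounded_cluster_point (Z.to_nat (rfloor beta)) X)
    as [z Hz]; [intros L i; apply Xbeta_bound, HX|].
  assert (HzX : Xbeta beta z).
  { apply Xbeta_closed. intros n. destruct (Hz n 0%nat) as [L [_ HL]]. exists (X L). split; auto. apply HX. }
  destruct (Hf z HzX (eps / 2) ltac:(lra)) as [delta [Hd Hdelta]].
  destruct (half_pow_small delta Hd) as [K HK].
  destruct (Hz K K) as [L [HL A1]].
  destruct (HX L) as [HXL [y [Hy [Hay Hfy]]]].
  assert (A2 : agree K z y) by (intros i Hi; rewrite A1, Hay; auto; lia).
  pose proof (Hdelta (X L) HXL ltac:(pose proof (rho_le_of_agree _ _ _ A1); lra)) as E1.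
  pose proof (Hdelta y Hy ltac:(pose proof (rho_le_of_agree _ _ _ A2); lra)) as E2.
  rewrite Rabs_minus_sym in E2. pose proof (Rabs_triang (f (X L) - f z) (f z - f y)) as E3.
  replace (f (X L) - f z + (f z - f y)) with (f (X L) - f y) in E3 by ring. lra.
Qed.

(* Evaluating [f] at some point of [X_beta] in each cylinder of length [L]. *)
Lemma uniform_word_approx beta f : continuous_on (Xbeta beta) f -> forall e, 0 < e ->
  exists (h : list nat -> R) L, forall x, Xbeta beta x -> Rabs (h (prefix_word L x) - f x) < e.
Proof.
  intros Hf e He. destruct (Xbeta_uniformly_continuous beta f Hf e He) as [L HL].
  assert (Hrep : forall w, exists z, (exists y, Xbeta beta y /\ agree L y (fun i => nth i w 0%nat)) ->
                                     Xbeta beta z /\ agree L z (fun i => nth i w 0%nat)).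
  { intros w. destruct (classic (exists y, Xbeta beta y /\ agree L y (fun i => nth i w 0%nat)))
      as [[y Hy]|Hn]; [exists y; auto | exists (fun _ => 0%nat); tauto]. }
  destruct (choice _ Hrep) as [rep Hrep'].
  exists (fun w => f (rep w)), L. intros x Hx.
  assert (Hagree : agree L x (fun i => nth i (prefix_word L x) 0%nat))
    by (intros i Hi; rewrite nth_prefix_word; auto).
  destruct (Hrep' (prefix_word L x)) as [Hz Hzx]; [exists x; auto|].
  apply HL; auto. intros i Hi. rewrite Hzx, <- Hagree; auto.
Qed.

(** * Genericity *)

Lemma Un_cv_limits_close a b I J e : Un_cv a I -> Un_cv b J ->
  (forall n, Rabs (a n - b n) <= e) -> Rabs (I - J) <= e.
Proof.
  intros Ha Hb H. apply Rnot_lt_le. intros Hlt.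
  set (d := Rabs (I - J) - e).
  destruct (Ha (d / 2) ltac:(unfold d; lra)) as [N1 H1].
  destruct (Hb (d / 2) ltac:(unfold d; lra)) as [N2 H2].
  specialize (H1 (N1 + N2)%nat ltac:(lia)). specialize (H2 (N1 + N2)%nat ltac:(lia)).
  specialize (H (N1 + N2)%nat). unfold Rdist in *.
  pose proof (Rabs_triang (I - a (N1 + N2)%nat) (a (N1 + N2)%nat - J)).
  pose proof (Rabs_triang (a (N1 + N2)%nat - b (N1 + N2)%nat) (b (N1 + N2)%nat - J)).
  rewrite Rabs_minus_sym in H1. unfold d in *.
  replace (I - a (N1 + N2)%nat + (a (N1 + N2)%nat - J)) with (I - J) in * by ring.
  replace (a (N1 + N2)%nat - b (N1 + N2)%nat + (b (N1 + N2)%nat - J))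
    with (a (N1 + N2)%nat - J) in * by ring.
  lra.
Qed.

(* A sequence uniformly approximated by convergent sequences is Cauchy. *)
Lemma Un_cv_of_uniform_approx (a : nat -> R) :
  (forall e, 0 < e -> exists b l, Un_cv b l /\ forall n, Rabs (a n - b n) <= e) ->
  exists I, Un_cv a I.
Proof.
  intros Happ. enough (Hc : Cauchy_crit a) by (destruct (R_complete _ Hc) as [I HI]; eauto).
  intros eta Heta. destruct (Happ (eta / 4) ltac:(lra)) as [b [l [Hb Hab]]].
  destruct (CV_Cauchy _ (exist _ _ Hb) (eta / 4) ltac:(lra)) as [N HN].
  exists N. intros n m Hn Hm. specialize (HN n m Hn Hm).
  pose proof (Hab n). pose proof (Hab m). unfold Rdist in *.
  pose proof (Rabs_triang (a n - b n) (b n - a m)).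
  pose proof (Rabs_triang (b n - b m) (b m - a m)).
  replace (a n - b n + (b n - a m)) with (a n - a m) in * by ring.
  replace (b n - b m + (b m - a m)) with (b n - a m) in * by ring.
  rewrite Rabs_minus_sym in H0. lra.
Qed.

Lemma birkhoff_avg_close f g x e : (forall j, Rabs (f (shiftn j x) - g (shiftn j x)) <= e) ->
  forall n, Rabs (birkhoff_avg f x n - birkhoff_avg g x n) <= e.
Proof.
  intros H n. unfold birkhoff_avg. rewrite !sum_f_R0_rsum, Nat.add_1_r.
  assert (HS : 0 < INR (S n)) by (apply lt_0_INR; lia).
  unfold Rdiv.
  rewrite <- Rmult_minus_distr_r, <- rsum_minus, Rabs_mult, Rabs_inv, (Rabs_right (INR (S n))) by lra.
  apply Rmult_le_reg_r with (INR (S n)); auto.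
  rewrite Rmult_assoc, Rinv_l, Rmult_1_r, Rmult_comm by lra.
  apply rsum_abs_le; auto.
Qed.

Lemma birkhoff_avg_word_fun mu B x (h : list nat -> R) L : (forall i, (x i <= B)%nat) ->
  freq_typical mu B x ->
  Un_cv (birkhoff_avg (fun y => h (prefix_word L y)) x) (lsum (words B L) (fun w => h w * mu (cylinder w))).
Proof.
  intros Hx Htyp.
  apply (Un_cv_ext (fun n => lsum (words B L) (fun w => h w * birkhoff_avg (indic (cylinder w)) x n))).
  - intros n. unfold birkhoff_avg. rewrite !sum_f_R0_rsum.
    rewrite (rsum_ext _ (fun j => lsum (words B L) (fun w => h w * indic (cylinder w) (shiftn j x))))
      by (intros j _; rewrite lsum_words_indic; auto; intros i; apply Hx).
    rewrite rsum_lsum. unfold Rdiv. rewrite Rmult_comm, <- lsum_scal. apply lsum_ext. intros w _.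
    rewrite rsum_scal, sum_f_R0_rsum. ring.
  - apply Un_cv_lsum. intros w Hw. apply CV_mult; [apply Un_cv_const | apply (Htyp L w Hw)].
Qed.

Theorem generic_of_freq_typical beta mu x : prob_measure mu -> mu (Xbeta beta) = 1 -> Xbeta beta x ->
  freq_typical mu (Z.to_nat (rfloor beta)) x -> generic (Xbeta beta) mu x.
Proof.
  intros PM HX1 HX Htyp f Hf. set (B := Z.to_nat (rfloor beta)) in *.
  assert (Hbd : forall j i, (shiftn j x i <= B)%nat) by (intros; apply Xbeta_bound, Xbeta_shift; auto).
  assert (Hclose : forall e h L, (forall y, Xbeta beta y -> Rabs (h (prefix_word L y) - f y) < e) ->
            forall n, Rabs (birkhoff_avg f x n - birkhoff_avg (fun y => h (prefix_word L y)) x n) <= e).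
  { intros e h L HL. apply birkhoff_avg_close. intros j. rewrite Rabs_minus_sym.
    left. apply HL, Xbeta_shift; auto. }
  destruct (Un_cv_of_uniform_approx (birkhoff_avg f x)) as [I HI].
  { intros e He. destruct (uniform_word_approx beta f Hf e He) as [h [L HL]].
    exists (birkhoff_avg (fun y => h (prefix_word L y)) x). eexists.
    split; [apply (birkhoff_avg_word_fun mu); [apply (Hbd 0%nat) | exact Htyp] | apply Hclose; auto]. }
  exists I. split; [|exact HI].
  apply (integral_of_simple_approx mu _ PM (borel_Xbeta beta) HX1). intros e He.
  destruct (uniform_word_approx beta f Hf e He) as [h [L HL]].
  exists (word_simple h (words B L)). split; [apply simple_word_simple|]. split.
  - intros y Hy. rewrite sval_word_simple, lsum_words_indic; auto. intros; apply Xbeta_bound; auto.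
  - rewrite sint_word_simple, Rabs_minus_sym.
    eapply Un_cv_limits_close;
      [exact HI | apply (birkhoff_avg_word_fun mu); [apply (Hbd 0%nat) | exact Htyp] | apply Hclose; eauto].
Qed.

Theorem proposition4p8 (beta : R) (Hbeta : 1 < beta) :
  forall mu : (Seq -> Prop) -> R,
    measure_on (Xbeta beta) mu -> invariant mu -> ergodic_on (Xbeta beta) mu ->
    exists x, Xbeta beta x /\ generic (Xbeta beta) mu x /\ closeable (PerG beta) x.
Proof.
  intros mu [PM HXm] Hinv Herg.
  destruct (exists_freq_typical_point mu beta PM Hinv Herg HXm) as [x [Hx Htyp]].
  exists x. split; [exact Hx|]. split.
  - apply generic_of_freq_typical; auto.
  - apply Xbeta_closeable; auto.
Qed.
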